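(* For every $a\ge0$, the set $\mathcal{P}^+$ is dense in $\mathcal{L}^+_a$ with respect to the topology of $\mathcal{A}_a$.
   Context: For $b>0$, $\|f\|_b=\sup_{k\in\mathbb{N}_0}b^{-k}|f^{(k)}(0)|$; $\mathcal{A}_a=\{f\text{ entire}:\|f\|_b<\infty\ \forall b>a\}$ with topology generated by $\{\|\cdot\|_b:b>a\}$. $\mathcal{L}^+$ is the set of entire functions $Cz^le^{\alpha z}\prod_{j\ge1}(1+\beta_jz)$ with $C\in\mathbb{C}$, $l\in\mathbb{N}_0$, $\alpha\ge0$, $\beta_j\ge\beta_{j+1}\ge0$, $\sum_j\beta_j<\infty$; $\mathcal{L}^+_a=\mathcal{L}^+\cap\mathcal{A}_a$; $\mathcal{P}^+$ is the set of polynomials belonging to $\mathcal{L}^+$. *)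

From Stdlib Require Import Reals List.
From Coquelicot Require Import Coquelicot.
Open Scope R_scope.

Definition C_is_derive (f : C -> C) (z : C) (l : C) : Prop :=
  @is_derive C_AbsRing C_NormedModule f z l.

Definition entire (f : C -> C) : Prop :=
  forall z : C, exists l : C, C_is_derive f z l.

(* D is the sequence of successive complex derivatives of f:
   D 0 = f and D (k+1) is the derivative of D k everywhere.
   For an entire f such a sequence exists and is unique, so D k 0 = f^(k)(0). *)
Definition deriv_chain (f : C -> C) (D : nat -> C -> C) : Prop :=
  (forall z, D O z = f z) /\
  (forall (k : nat) (z : C), C_is_derive (D k) z (D (S k) z)).

(* ||f||_b = sup_k b^{-k} |f^(k)(0)|, valued in the extended reals. *)
Definition seminorm (f : C -> C) (b : R) : Rbar :=
  Lub_Rbar (fun r : R => exists (D : nat -> C -> C) (k : nat),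
                deriv_chain f D /\ r = / (b ^ k) * Cmod (D k (RtoC 0))).

Definition in_A (a : R) (f : C -> C) : Prop :=
  entire f /\ forall b : R, a < b -> Rbar_lt (seminorm f b) p_infty.

Definition cexp (z : C) : C :=
  (exp (fst z) * cos (snd z), exp (fst z) * sin (snd z)).

Fixpoint partial_prod (beta : nat -> R) (z : C) (n : nat) : C :=
  match n with
  | O => RtoC 1
  | S m => Cmult (partial_prod beta z m) (Cplus (RtoC 1) (Cmult (RtoC (beta m)) z))
  end.

(* Laguerre-Polya type class L^+ : f(z) = C z^l e^{alpha z} prod_j (1 + beta_j z),
   alpha >= 0, beta_j >= beta_{j+1} >= 0, sum beta_j < oo
   (indices shifted to start at j = 0). *)
Definition in_Lplus (f : C -> C) : Prop :=
  exists (c : C) (l : nat) (alpha : R) (beta : nat -> R),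
    0 <= alpha /\
    (forall j, beta (S j) <= beta j) /\
    (forall j, 0 <= beta j) /\
    ex_series beta /\
    forall z : C, exists P : C,
      filterlim (partial_prod beta z) eventually (locally P) /\
      f z = Cmult (Cmult (Cmult c (Cpow z l)) (cexp (Cmult (RtoC alpha) z))) P.

Definition in_Lplus_a (a : R) (f : C -> C) : Prop := in_Lplus f /\ in_A a f.

Definition is_poly (f : C -> C) : Prop :=
  exists (n : nat) (c : nat -> C), forall z : C,
    f z = fold_right Cplus (RtoC 0) (map (fun k => Cmult (c k) (Cpow z k)) (seq 0 n)).

Definition in_Pplus (f : C -> C) : Prop := is_poly f /\ in_Lplus f.

From Stdlib Require Import Reals List Lra Lia Classical Permutation Sorted Mergesort Orders.
From Coquelicot Require Import Coquelicot.
Open Scope R_scope.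

(* Write f(z) = c z^l e^(alpha z) prod_j (1 + beta_j z) and approximate it by the polynomials
   p_J(z) = c z^l (1 + alpha z / 2^J)^(2^J) prod_(j<J) (1 + beta_j z), which lie in P^+.
   Up to the factor c, the Taylor coefficients of p_J are nonnegative and nondecreasing in J:
   a new factor 1 + beta_J z, or the splitting of 1 + y z into (1 + y z / 2)^2, can only
   increase coefficients.  As p_J -> f pointwise on the real axis, a monotone convergence
   argument for power series shows that these coefficients converge to those of f / c.
   Hence ||p_J - f||_b = |c| sup_k b^-k k! (A_k - R_Jk) with 0 <= R_Jk <= A_k <= M b'^k for
   any a < b' < b: the tail of the supremum is uniformly small by (b'/b)^k and each of the
   finitely many remaining terms tends to 0.  All derivatives at 0 are computed on the real
   axis, where the functions are real power series; the only complex analysis needed is that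
   a complex derivative restricts to real derivatives of the real and imaginary parts. *)

(** * Power series with nonnegative coefficients *)

Lemma is_lim_seq_sum_f_R0 (u : nat -> nat -> R) (v : nat -> R) (n : nat) :
  (forall k, is_lim_seq (fun j => u j k) (v k)) ->
  is_lim_seq (fun j => sum_f_R0 (u j) n) (sum_f_R0 v n).
Proof.
  intros Huv. induction n as [|n IH]; simpl; [apply Huv|].
  now apply is_lim_seq_plus'.
Qed.

Lemma term_le_sum_f_R0 (u : nat -> R) (n : nat) :
  (forall k, 0 <= u k) -> u n <= sum_f_R0 u n.
Proof.
  intros Hu. destruct n as [|n]; simpl; [lra|].
  pose proof (cond_pos_sum u n Hu). lra.
Qed.

Lemma is_pseries_partial_iff (a : nat -> R) (s l : R) :
  is_pseries a s l <-> is_lim_seq (fun n => sum_f_R0 (fun k => a k * s ^ k) n) l.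
Proof.
  rewrite is_pseries_R, is_series_Reals, is_lim_seq_Reals. reflexivity.
Qed.

Section NonnegPseries.
Variables (a : nat -> R) (s l : R).
Hypotheses (a_nonneg : forall k, 0 <= a k) (s_nonneg : 0 <= s) (a_pseries : is_pseries a s l).

Lemma pseries_partial_le (n : nat) : sum_f_R0 (fun k => a k * s ^ k) n <= l.
Proof.
  apply sum_incr; [apply is_lim_seq_Reals, is_pseries_partial_iff, a_pseries|].
  intros k. apply Rmult_le_pos; [apply a_nonneg | now apply pow_le].
Qed.

Lemma pseries_term_le (n : nat) : a n * s ^ n <= l.
Proof.
  eapply Rle_trans; [|apply (pseries_partial_le n)].
  apply (term_le_sum_f_R0 (fun k => a k * s ^ k)).
  intros k. apply Rmult_le_pos; [apply a_nonneg | now apply pow_le].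
Qed.

End NonnegPseries.

Lemma pseries_le (a b : nat -> R) (s la lb : R) :
  0 <= s -> (forall k, 0 <= a k <= b k) -> is_pseries a s la -> is_pseries b s lb -> la <= lb.
Proof.
  intros Hs Hab Ha Hb. apply is_pseries_partial_iff in Ha, Hb.
  refine (is_lim_seq_le _ _ la lb _ Ha Hb).
  intros n. apply sum_growing. intros k.
  apply Rmult_le_compat_r; [now apply pow_le | apply Hab].
Qed.

Lemma pseries_abs_le (a : nat -> R) (t l L : R) :
  (forall k, 0 <= a k) -> is_pseries a t l -> is_pseries a (Rabs t) L -> Rabs l <= L.
Proof.
  intros Ha Ht Habs. apply is_pseries_R in Ht, Habs.
  assert (Hext : forall k, Rabs (a k * t ^ k) = a k * Rabs t ^ k).
  { intros k. now rewrite Rabs_mult, <- RPow_abs, Rabs_pos_eq. }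
  rewrite <- (is_series_unique _ _ Ht), <- (is_series_unique _ _ Habs).
  rewrite (Series_ext _ _ (fun k => eq_sym (Hext k))).
  apply Series_Rabs. exists L. now apply is_series_ext with (2 := Habs).
Qed.

Lemma CV_radius_infinite_of_bounded (a : nat -> R) :
  (forall x, exists M, forall n, Rabs (a n * x ^ n) <= M) -> CV_radius a = p_infty.
Proof.
  intros Hb. rewrite <- (is_lub_Rbar_unique _ _ (CV_radius_bounded a)).
  apply is_lub_Rbar_unique. split.
  - intros x _. exact I.
  - intros [r| |] Hu; simpl; auto.
    + specialize (Hu (r + 1) (Hb (r + 1))); simpl in Hu; lra.
    + exact (Hu 0 (Hb 0)).
Qed.

Lemma CV_radius_dominated (a b : nat -> R) :
  (forall k, Rabs (b k) <= a k) -> (forall s, ex_pseries a s) -> CV_radius b = p_infty.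
Proof.
  intros Hba Ha. apply CV_radius_infinite_of_bounded. intros x.
  exists (PSeries a (Rabs x)). intros n.
  assert (Hnn : forall k, 0 <= a k) by (intros k; exact (Rle_trans _ _ _ (Rabs_pos _) (Hba k))).
  rewrite Rabs_mult, <- RPow_abs.
  apply Rle_trans with (a n * Rabs x ^ n).
  - apply Rmult_le_compat_r; [apply pow_le, Rabs_pos | apply Hba].
  - exact (pseries_term_le a _ _ Hnn (Rabs_pos x) (PSeries_correct _ _ (Ha _)) n).
Qed.

Section PseriesMonotoneLimit.
Variables (r : nat -> nat -> R) (Q : nat -> R -> R) (H : R -> R).
Hypotheses (r_nonneg : forall j k, 0 <= r j k) (r_incr : forall j k, r j k <= r (S j) k)
  (r_pseries : forall j s, is_pseries (r j) s (Q j s))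
  (Q_lim : forall s, is_lim_seq (fun j => Q j s) (H s)).

Lemma pseries_le_lim (j : nat) (s : R) : 0 <= s -> Q j s <= H s.
Proof.
  intros Hs. apply (is_lim_seq_incr_compare (fun j => Q j s)); [apply Q_lim|].
  intros n. apply (pseries_le (r n) (r (S n)) s); auto.
Qed.

Let coef_lim (k : nat) : R := real (Lim_seq (fun j => r j k)).

Lemma is_lim_seq_coef (k : nat) : is_lim_seq (fun j => r j k) (coef_lim k).
Proof.
  destruct (ex_finite_lim_seq_incr (fun j => r j k) (H 1)) as [c Hc]; [intros j; apply r_incr| |].
  - intros j. apply Rle_trans with (2 := pseries_le_lim j 1 Rle_0_1).
    rewrite <- (Rmult_1_r (r j k)), <- (pow1 k) at 1.
    apply (pseries_term_le (r j)); auto using Rle_0_1.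
  - unfold coef_lim. now rewrite (is_lim_seq_unique _ _ Hc).
Qed.

Lemma coef_le_lim (j k : nat) : r j k <= coef_lim k.
Proof.
  apply (is_lim_seq_incr_compare (fun j => r j k)); [apply is_lim_seq_coef|].
  intros n. apply r_incr.
Qed.

Lemma coef_lim_nonneg (k : nat) : 0 <= coef_lim k.
Proof. exact (Rle_trans _ _ _ (r_nonneg 0 k) (coef_le_lim 0 k)). Qed.

Lemma is_pseries_coef_lim_nonneg (s : R) : 0 <= s -> is_pseries coef_lim s (H s).
Proof.
  intros Hs.
  assert (Hterm : forall k, 0 <= coef_lim k * s ^ k).
  { intros k. apply Rmult_le_pos; [apply coef_lim_nonneg | now apply pow_le]. }
  assert (Hbound : forall n, sum_f_R0 (fun k => coef_lim k * s ^ k) n <= H s).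
  { intros n. refine (is_lim_seq_le _ _ _ _ _ (is_lim_seq_sum_f_R0 _ _ n (fun k =>
      is_lim_seq_scal_r _ (s ^ k) _ (is_lim_seq_coef k))) (is_lim_seq_const (H s))).
    intros j. apply Rle_trans with (2 := pseries_le_lim j s Hs).
    exact (pseries_partial_le (r j) s (Q j s) (r_nonneg j) Hs (r_pseries j s) n). }
  assert (Hincr : forall n, sum_f_R0 (fun k => coef_lim k * s ^ k) n
                          <= sum_f_R0 (fun k => coef_lim k * s ^ k) (S n)).
  { intros n. rewrite tech5. pose proof (Hterm (S n)). lra. }
  destruct (ex_finite_lim_seq_incr _ (H s) Hincr Hbound) as [l Hl].
  apply is_pseries_partial_iff.
  replace (H s) with l; [exact Hl|]. apply Rle_antisym.
  - exact (is_lim_seq_le _ _ _ _ Hbound Hl (is_lim_seq_const (H s))).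
  - refine (is_lim_seq_le _ _ _ _ _ (Q_lim s) (is_lim_seq_const l)).
    intros j. apply (pseries_le (r j) coef_lim s); auto.
    + intros k. split; [apply r_nonneg | apply coef_le_lim].
    + now apply is_pseries_partial_iff.
Qed.

Lemma pseries_coef_lim_tail (t S : R) (j : nat) : is_pseries coef_lim t S ->
  Rabs (S - Q j t) <= H (Rabs t) - Q j (Rabs t).
Proof.
  intros HS.
  assert (Hdiff : forall x l, is_pseries coef_lim x l ->
            is_pseries (fun k => coef_lim k - r j k) x (l - Q j x)).
  { intros x l Hl. apply is_pseries_ext with (2 := is_pseries_minus _ _ _ _ _ Hl (r_pseries j x)).
    intros k. reflexivity. }
  apply (pseries_abs_le (fun k => coef_lim k - r j k) t); [|now apply Hdiff|].
  - intros k. pose proof (coef_le_lim j k). lra.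
  - apply Hdiff, is_pseries_coef_lim_nonneg, Rabs_pos.
Qed.

Lemma is_pseries_coef_lim (t : R) : is_pseries coef_lim t (H t).
Proof.
  set (u := Rabs t).
  assert (Hu := is_pseries_coef_lim_nonneg u (Rabs_pos t)).
  assert (Hex : ex_pseries coef_lim t).
  { apply ex_pseries_R, ex_series_Rabs. exists (H u). apply is_pseries_R in Hu.
    apply is_series_ext with (2 := Hu). intros k.
    rewrite Rabs_mult, <- RPow_abs, Rabs_pos_eq; [reflexivity | apply coef_lim_nonneg]. }
  assert (HS := PSeries_correct _ _ Hex). set (S := PSeries coef_lim t) in HS.
  assert (Htail : is_lim_seq (fun j => H u - Q j u) 0).
  { rewrite <- (Rminus_diag_eq (H u) (H u) eq_refl).
    apply is_lim_seq_minus'; [apply is_lim_seq_const | apply Q_lim]. }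
  assert (HQ : is_lim_seq (fun j => Q j t) S).
  { apply is_lim_seq_le_le with (fun j => S - (H u - Q j u)) (fun j => S + (H u - Q j u)).
    - intros j. pose proof (pseries_coef_lim_tail t S j HS) as Hj.
      fold u in Hj. apply Rabs_le_between in Hj. lra.
    - rewrite <- (Rminus_0_r S) at 1.
      apply is_lim_seq_minus'; [apply is_lim_seq_const | exact Htail].
    - rewrite <- (Rplus_0_r S) at 1.
      apply is_lim_seq_plus'; [apply is_lim_seq_const | exact Htail]. }
  replace (H t) with S; [exact HS|].
  apply is_lim_seq_unique in HQ. rewrite (is_lim_seq_unique _ _ (Q_lim t)) in HQ.
  now injection HQ.
Qed.

End PseriesMonotoneLimit.

(** * Derivatives at 0 computed on the real axis *)

Lemma C_is_derive_real_axis (h : C -> C) (t : R) (l : C) :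
  C_is_derive h (RtoC t) l ->
  forall eps : posreal, locally t (fun s : R =>
    Cmod (h (RtoC s) - h (RtoC t) - RtoC (s - t) * l)%C <= eps * Rabs (s - t)).
Proof.
  intros [_ Hdom] eps.
  destruct (Hdom (RtoC t) (fun P HP => HP) eps) as [d Hd]; exists d; intros s Hs.
  assert (Hmin : forall x y : R,
    @minus (AbsRing_NormedModule C_AbsRing) (RtoC x) (RtoC y) = RtoC (x - y)).
  { intros x y; apply injective_projections; simpl; ring. }
  assert (Hball : @ball (AbsRing_UniformSpace C_AbsRing) (RtoC t) d (RtoC s)).
  { unfold ball; simpl; unfold AbsRing_ball. rewrite Hmin; simpl; rewrite Cmod_R; exact Hs. }
  specialize (Hd _ Hball). rewrite Hmin in Hd.
  unfold norm in Hd; simpl in Hd. rewrite Cmod_R in Hd. exact Hd.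
Qed.

Lemma is_derive_Re_Im_real_axis (h : C -> C) (t : R) (l : C) :
  C_is_derive h (RtoC t) l ->
  is_derive (fun s : R => fst (h (RtoC s))) t (fst l) /\
  is_derive (fun s : R => snd (h (RtoC s))) t (snd l).
Proof.
  intros Hh. pose proof (C_is_derive_real_axis h t l Hh) as Ho.
  split; (split; [apply is_linear_scal_l|]); intros x Hx eps;
    apply (@is_filter_lim_locally_unique R_AbsRing R_NormedModule) in Hx; subst x;
    apply (filter_imp _ _) with (2 := Ho eps); intros s Hs;
    eapply Rle_trans with (2 := Rle_trans _ _ _ (Rmax_Cmod _) Hs);
    unfold norm, minus, plus, opp, scal; simpl; unfold abs, mult; simpl.
  - apply Rle_trans with (2 := Rmax_l _ _), Req_le; f_equal; ring.
  - apply Rle_trans with (2 := Rmax_r _ _), Req_le; f_equal; ring.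
Qed.

Lemma deriv_chain_real_PSeries (g : C -> C) (c : C) (b : nat -> R) (D : nat -> C -> C) :
  CV_radius b = p_infty ->
  (forall t : R, g (RtoC t) = (c * RtoC (PSeries b t))%C) ->
  deriv_chain g D ->
  forall k, D k (RtoC 0) = (c * RtoC (b k * INR (Factorial.fact k)))%C.
Proof.
  intros Hrad Hg [HD0 HDS].
  assert (Hin : forall x, Rbar_lt (Rabs x) (CV_radius b)) by (intros x; rewrite Hrad; exact I).
  assert (Hk : forall k t, D k (RtoC t) = (c * RtoC (Derive_n (PSeries b) k t))%C).
  { induction k as [|k IH]; intros t; [now rewrite HD0, Hg|].
    destruct (is_derive_Re_Im_real_axis (D k) t _ (HDS k (RtoC t))) as [Hre Him].
    apply is_derive_unique in Hre, Him.
    assert (Hder := Derive_correct _ _ (ex_derive_n_PSeries (S k) b t (Hin t))).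
    assert (Hre' : is_derive (fun s => fst (D k (RtoC s))) t
                     (fst c * Derive_n (PSeries b) (S k) t)).
    { apply is_derive_ext with (fun s => fst c * Derive_n (PSeries b) k s);
        [intros s; rewrite IH; simpl; ring | now apply is_derive_scal]. }
    assert (Him' : is_derive (fun s => snd (D k (RtoC s))) t
                     (snd c * Derive_n (PSeries b) (S k) t)).
    { apply is_derive_ext with (fun s => snd c * Derive_n (PSeries b) k s);
        [intros s; rewrite IH; simpl; ring | now apply is_derive_scal]. }
    pose proof (eq_trans (eq_sym Hre) (is_derive_unique _ _ _ Hre')) as Ere.
    pose proof (eq_trans (eq_sym Him) (is_derive_unique _ _ _ Him')) as Eim.
    apply injective_projections; simpl; [rewrite Ere | rewrite Eim]; simpl; ring. }
  intros k. rewrite Hk, Derive_n_coef; [reflexivity|]. now rewrite Hrad.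
Qed.

Lemma deriv_chain_opp (f g : C -> C) (D : nat -> C -> C) :
  (forall z, f z = (- g z)%C) -> deriv_chain g D -> deriv_chain f (fun k z => (- D k z)%C).
Proof.
  intros Hfg [HD0 HDS]. split.
  - intros z. now rewrite Hfg, HD0.
  - intros k z. exact (@is_derive_opp C_AbsRing C_NormedModule _ _ _ (HDS k z)).
Qed.

Lemma seminorm_le (g : C -> C) (b m : R) :
  (forall D k, deriv_chain g D -> / b ^ k * Cmod (D k (RtoC 0)) <= m) ->
  Rbar_le (seminorm g b) m.
Proof.
  intros Hm. apply (proj2 (Lub_Rbar_correct _)).
  intros x (D & k & HD & ->). exact (Hm D k HD).
Qed.

Lemma seminorm_finite_bound (g : C -> C) (D : nat -> C -> C) (b : R) :
  deriv_chain g D -> Rbar_lt (seminorm g b) p_infty ->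
  exists M, forall k, / b ^ k * Cmod (D k (RtoC 0)) <= M.
Proof.
  intros HD Hfin. unfold seminorm in Hfin.
  destruct (Lub_Rbar_correct (fun r => exists D k, deriv_chain g D /\
              r = / b ^ k * Cmod (D k (RtoC 0)))) as [Hub _].
  destruct (Lub_Rbar _) as [M| |]; simpl in Hfin; try contradiction.
  - exists M. intros k. apply (Hub _ (ex_intro _ D (ex_intro _ k (conj HD eq_refl)))).
  - exfalso. apply (Hub _ (ex_intro _ D (ex_intro _ 0%nat (conj HD eq_refl)))).
Qed.

Lemma seminorm_no_deriv_chain (g : C -> C) (b : R) :
  ~ (exists D, deriv_chain g D) -> seminorm g b = m_infty.
Proof.
  intros Hno. apply is_lub_Rbar_unique. split.
  - intros x (D & k & HD & _). exfalso. exact (Hno (ex_intro _ D HD)).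
  - intros [] _; simpl; auto.
Qed.

Lemma seminorm_real_pseries_le (g : C -> C) (c : C) (b : nat -> R) (rho m : R) :
  CV_radius b = p_infty -> (forall t : R, g (RtoC t) = (c * RtoC (PSeries b t))%C) ->
  (forall k, / rho ^ k * (Cmod c * (Rabs (b k) * INR (Factorial.fact k))) <= m) ->
  Rbar_le (seminorm g rho) m.
Proof.
  intros Hrad Hg Hm. apply seminorm_le. intros D k HD.
  rewrite (deriv_chain_real_PSeries g c b D Hrad Hg HD k), Cmod_mult, Cmod_R, Rabs_mult.
  rewrite (Rabs_pos_eq (INR _)) by apply pos_INR. apply Hm.
Qed.

Lemma real_pseries_coef_bound (g : C -> C) (c : C) (b : nat -> R) (D : nat -> C -> C) (rho : R) :
  0 < rho -> CV_radius b = p_infty -> (forall t : R, g (RtoC t) = (c * RtoC (PSeries b t))%C) ->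
  deriv_chain g D -> Rbar_lt (seminorm g rho) p_infty ->
  exists M, forall k, Cmod c * (Rabs (b k) * INR (Factorial.fact k)) <= M * rho ^ k.
Proof.
  intros Hrho Hrad Hg HD Hfin. destruct (seminorm_finite_bound g D rho HD Hfin) as [M HM].
  exists M. intros k. specialize (HM k).
  rewrite (deriv_chain_real_PSeries g c b D Hrad Hg HD k), Cmod_mult, Cmod_R, Rabs_mult in HM.
  rewrite (Rabs_pos_eq (INR _)) in HM by apply pos_INR.
  assert (Hk : 0 < rho ^ k) by now apply pow_lt.
  apply Rmult_le_reg_l with (/ rho ^ k); [now apply Rinv_0_lt_compat|].
  replace (/ rho ^ k * (M * rho ^ k)) with M by (field; now apply Rgt_not_eq). exact HM.
Qed.

(** * Products of linear factors *)

Definition mul_linear_coef (x : R) (u : nat -> R) (k : nat) : R :=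
  u k + match k with O => 0 | S k' => x * u k' end.

Definition prod_linear_coef (L : list R) : nat -> R :=
  fold_right mul_linear_coef (fun k => match k with O => 1 | S _ => 0 end) L.

Definition prod_linear (L : list R) (t : R) : R :=
  fold_right (fun x p => (1 + x * t) * p) 1 L.

Lemma is_pseries_mul_linear_coef (x : R) (u : nat -> R) (t s : R) :
  is_pseries u t s -> is_pseries (mul_linear_coef x u) t ((1 + x * t) * s).
Proof.
  intros Hu.
  assert (Hsum := is_pseries_plus _ _ _ _ _ Hu
                    (is_pseries_scal x _ _ _ (Rmult_comm t x) (is_pseries_incr_1 _ _ _ Hu))).
  replace ((1 + x * t) * s) with (plus s (scal x (scal t s))).
  - apply is_pseries_ext with (2 := Hsum). intros [|k];
      unfold PS_plus, PS_scal, PS_incr_1, mul_linear_coef, plus, scal, zero; simpl;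
      unfold mult; simpl; ring.
  - unfold plus, scal; simpl; unfold mult; simpl; ring.
Qed.

Lemma is_pseries_prod_linear_coef (L : list R) (t : R) :
  is_pseries (prod_linear_coef L) t (prod_linear L t).
Proof.
  induction L as [|x L IH]; simpl; [|now apply is_pseries_mul_linear_coef].
  apply is_pseries_R. unfold is_series.
  apply filterlim_ext with (fun _ => 1); [|apply filterlim_const].
  intros n. induction n as [|n IHn]; [rewrite sum_O; simpl; ring|].
  rewrite sum_Sn, <- IHn. unfold plus; simpl; ring.
Qed.

Lemma prod_linear_repeat_app (y : R) (m : nat) (L : list R) (t : R) :
  prod_linear (repeat y m ++ L) t = (1 + y * t) ^ m * prod_linear L t.
Proof. induction m as [|m IH]; simpl; [ring|]. unfold prod_linear in *. rewrite IH. ring. Qed.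

Definition coef_dominated (u v : nat -> R) : Prop := forall k, 0 <= u k <= v k.

Lemma coef_dominated_mul_linear (x : R) (u : nat -> R) :
  0 <= x -> (forall k, 0 <= u k) -> coef_dominated u (mul_linear_coef x u).
Proof.
  intros Hx Hu [|k]; unfold mul_linear_coef.
  - specialize (Hu 0%nat). lra.
  - pose proof (Hu (S k)). pose proof (Hu k). split; nra.
Qed.

(* (1 + y t / 2)^2 = (1 + y t) + (y t / 2)^2: splitting a factor only adds nonnegative terms. *)
Lemma coef_dominated_split_factor (y : R) (u v : nat -> R) :
  0 <= y -> coef_dominated u v ->
  coef_dominated (mul_linear_coef y u) (mul_linear_coef (y / 2) (mul_linear_coef (y / 2) v)).
Proof.
  intros Hy Huv [|[|k]]; unfold mul_linear_coef.
  - specialize (Huv 0%nat). lra.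
  - pose proof (Huv 1%nat). pose proof (Huv 0%nat). split; nra.
  - pose proof (Huv (S (S k))). pose proof (Huv (S k)). pose proof (Huv k). split; nra.
Qed.

Lemma coef_dominated_split_repeat (y : R) (m : nat) (u v : nat -> R) :
  0 <= y -> coef_dominated u v ->
  coef_dominated (fold_right mul_linear_coef u (repeat y m))
                 (fold_right mul_linear_coef v (repeat (y / 2) (2 * m))).
Proof.
  intros Hy Huv. induction m as [|m IH]; simpl; [exact Huv|].
  replace (m + S (m + 0))%nat with (S (m + (m + 0))) by lia. simpl.
  now apply coef_dominated_split_factor.
Qed.

Lemma prod_linear_coef_nonneg (L : list R) :
  (forall x, In x L -> 0 <= x) -> forall k, 0 <= prod_linear_coef L k.
Proof.
  induction L as [|x L IH]; simpl; intros HL k.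
  - destruct k; lra.
  - pose proof (coef_dominated_mul_linear x _ (HL x (or_introl eq_refl))
                  (IH (fun y Hy => HL y (or_intror Hy))) k).
    lra.
Qed.

(** * Polynomials in P^+ *)

Definition Cpoly (c : nat -> C) (n : nat) (z : C) : C :=
  fold_right Cplus (RtoC 0) (map (fun k => (c k * z ^ k)%C) (seq 0 n)).

Lemma Cpoly_S (c : nat -> C) (n : nat) (z : C) :
  Cpoly c (S n) z = (Cpoly c n z + c n * z ^ n)%C.
Proof.
  unfold Cpoly. rewrite seq_S, map_app, fold_right_app. simpl.
  generalize (map (fun k => (c k * z ^ k)%C) (seq 0 n)).
  induction l as [|y l IH]; simpl; [ring|]. rewrite IH. ring.
Qed.

Lemma Cpoly_ext (c d : nat -> C) (n : nat) (z : C) :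
  (forall k, (k < n)%nat -> c k = d k) -> Cpoly c n z = Cpoly d n z.
Proof.
  induction n as [|n IH]; intros Hcd; [reflexivity|].
  rewrite !Cpoly_S, IH, Hcd by auto with arith. reflexivity.
Qed.

Lemma Cpoly_lin (u v : C) (c d : nat -> C) (n : nat) (z : C) :
  Cpoly (fun k => u * c k + v * d k)%C n z = (u * Cpoly c n z + v * Cpoly d n z)%C.
Proof.
  induction n as [|n IH]; [unfold Cpoly; simpl; ring|]. rewrite !Cpoly_S, IH. ring.
Qed.

Lemma Cpoly_shift (c : nat -> C) (n : nat) (z : C) :
  (z * Cpoly c n z)%C =
  Cpoly (fun k => match k with O => RtoC 0 | S k' => c k' end) (S n) z.
Proof.
  induction n as [|n IH]; [unfold Cpoly; simpl; ring|].
  rewrite Cpoly_S, (Cpoly_S _ (S n)), <- IH. simpl. ring.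
Qed.

Lemma is_poly_ext (f g : C -> C) : is_poly f -> (forall z, f z = g z) -> is_poly g.
Proof. intros (n & c & Hf) Hfg. exists n, c. intros z. rewrite <- Hfg. apply Hf. Qed.

Lemma is_poly_mul_linear (f : C -> C) (u v : C) :
  is_poly f -> is_poly (fun z => ((u + v * z) * f z)%C).
Proof.
  intros (n & c & Hf).
  set (c0 k := if Nat.ltb k n then c k else RtoC 0).
  exists (S n), (fun k => u * c0 k + v * match k with O => RtoC 0 | S k' => c0 k' end)%C.
  intros z. change (((u + v * z) * f z)%C =
    Cpoly (fun k => u * c0 k + v * match k with O => RtoC 0 | S k' => c0 k' end)%C (S n) z).
  assert (Hn : f z = Cpoly c0 n z).
  { rewrite Hf. apply Cpoly_ext. intros k Hk. unfold c0. now rewrite (proj2 (Nat.ltb_lt k n) Hk). }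
  assert (HSn : f z = Cpoly c0 (S n) z).
  { rewrite Cpoly_S, <- Hn. unfold c0. rewrite Nat.ltb_irrefl. ring. }
  rewrite Cpoly_lin, <- Cpoly_shift, <- Hn, <- HSn. ring.
Qed.

Definition Cprod_linear (L : list R) (z : C) : C :=
  fold_right (fun x p => ((RtoC 1 + RtoC x * z) * p)%C) (RtoC 1) L.

Lemma Cprod_linear_RtoC (L : list R) (t : R) :
  Cprod_linear L (RtoC t) = RtoC (prod_linear L t).
Proof.
  induction L as [|x L IH]; [reflexivity|]. unfold Cprod_linear in *; simpl. rewrite IH.
  apply injective_projections; simpl; ring.
Qed.

Lemma is_poly_monomial_prod_linear (c : C) (l : nat) (L : list R) :
  is_poly (fun z => (c * z ^ l * Cprod_linear L z)%C).
Proof.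
  assert (Hprod : is_poly (Cprod_linear L)).
  { induction L as [|x L IH].
    - exists 1%nat, (fun _ => RtoC 1). intros z. unfold Cprod_linear; simpl. ring.
    - exact (is_poly_mul_linear _ (RtoC 1) (RtoC x) IH). }
  assert (Hmon : forall m, is_poly (fun z => (z ^ m * Cprod_linear L z)%C)).
  { induction m as [|m IH].
    - apply is_poly_ext with (1 := Hprod). intros z; simpl; ring.
    - apply is_poly_ext with (1 := is_poly_mul_linear _ (RtoC 0) (RtoC 1) IH).
      intros z; simpl; ring. }
  apply is_poly_ext with (1 := is_poly_mul_linear _ c (RtoC 0) (Hmon l)).
  intros z; ring.
Qed.

Module RgeOrder <: TotalLeBool.
  Definition t := R.
  Definition leb (x y : R) : bool := if Rle_dec y x then true else false.
  Theorem leb_total : forall x y, leb x y = true \/ leb y x = true.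
  Proof.
    intros x y. unfold leb. destruct (Rle_dec y x); [now left|].
    destruct (Rle_dec x y); [now right | lra].
  Qed.
End RgeOrder.

Module RgeSort := Sort RgeOrder.

Lemma Cprod_linear_perm (L L' : list R) (z : C) :
  Permutation L L' -> Cprod_linear L z = Cprod_linear L' z.
Proof.
  induction 1 as [| x L L' _ IH | x y L | L L' L'' _ IH1 _ IH2]; unfold Cprod_linear in *;
    simpl; try congruence; ring.
Qed.

Lemma nth_decreasing_of_sorted (L : list R) :
  Sorted (fun x y => RgeOrder.leb x y = true) L -> (forall x, In x L -> 0 <= x) ->
  forall i, nth (S i) L 0 <= nth i L 0.
Proof.
  induction 1 as [|x L HL IH Hhd]; intros Hnn i; [destruct i; simpl; lra|].
  destruct i as [|i].
  - destruct Hhd as [|y L' Hxy]; simpl; [apply Hnn; now left|].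
    unfold RgeOrder.leb in Hxy. destruct (Rle_dec y x); [assumption | discriminate].
  - apply IH. intros y Hy. apply Hnn. now right.
Qed.

Lemma partial_prod_nth_cons (x : R) (L : list R) (z : C) (n : nat) :
  partial_prod (fun j => nth j (x :: L) 0) z (S n) =
  ((RtoC 1 + RtoC x * z) * partial_prod (fun j => nth j L 0) z n)%C.
Proof.
  induction n as [|n IH]; [simpl; ring|].
  change (partial_prod (fun j => nth j (x :: L) 0) z (S (S n))) with
    (partial_prod (fun j => nth j (x :: L) 0) z (S n) * (RtoC 1 + RtoC (nth n L 0) * z))%C.
  rewrite IH. simpl. ring.
Qed.

Lemma partial_prod_nth (L : list R) (z : C) (n : nat) :
  (length L <= n)%nat -> partial_prod (fun j => nth j L 0) z n = Cprod_linear L z.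
Proof.
  revert n; induction L as [|x L IH]; intros n Hn.
  - induction n as [|n IHn]; [reflexivity|].
    change (partial_prod (fun j => nth j nil 0) z (S n)) with
      (partial_prod (fun j => nth j nil 0) z n * (RtoC 1 + RtoC (nth n nil 0) * z))%C.
    rewrite IHn by (simpl; lia). destruct n; unfold Cprod_linear; simpl;
      apply injective_projections; simpl; ring.
  - destruct n as [|n]; simpl in Hn; [lia|].
    rewrite partial_prod_nth_cons, IH by lia. reflexivity.
Qed.

Lemma ex_series_eventually_0 (u : nat -> R) (N : nat) :
  (forall k, (N <= k)%nat -> u k = 0) -> ex_series u.
Proof.
  intros Hu. exists (sum_n u N). unfold is_series.
  apply filterlim_ext_loc with (fun _ => sum_n u N); [|apply filterlim_const].
  exists N. intros n Hn. induction Hn as [|n Hn IH]; [reflexivity|].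
  rewrite sum_Sn, <- IH, Hu by lia. symmetry. apply Rplus_0_r.
Qed.

Lemma cexp_RtoC (x : R) : cexp (RtoC x) = RtoC (exp x).
Proof.
  unfold cexp. simpl. rewrite cos_0, sin_0.
  apply injective_projections; simpl; ring.
Qed.

Lemma in_Pplus_linear_factors (c : C) (l : nat) (L : list R) :
  (forall x, In x L -> 0 <= x) -> in_Pplus (fun z => (c * z ^ l * Cprod_linear L z)%C).
Proof.
  intros HL. split; [apply is_poly_monomial_prod_linear|].
  set (L' := RgeSort.sort L).
  assert (Hperm : Permutation L L') by apply RgeSort.Permuted_sort.
  assert (HL' : forall x, In x L' -> 0 <= x)
    by (intros x Hx; apply HL, (Permutation_in x (Permutation_sym Hperm) Hx)).
  assert (Hnth : forall j, 0 <= nth j L' 0).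
  { intros j. destruct (Nat.lt_ge_cases j (length L')).
    - apply HL', nth_In; assumption.
    - rewrite nth_overflow by assumption. lra. }
  exists c, l, 0, (fun j => nth j L' 0).
  split; [lra|]. split; [apply nth_decreasing_of_sorted; [apply RgeSort.Sorted_sort | exact HL']|].
  split; [exact Hnth|]. split.
  - apply (ex_series_eventually_0 _ (length L')). intros k Hk. now apply nth_overflow.
  - intros z. exists (Cprod_linear L z). split.
    + apply filterlim_ext_loc with (fun _ => Cprod_linear L z); [|apply filterlim_const].
      exists (length L'). intros n Hn. rewrite partial_prod_nth by exact Hn.
      now apply Cprod_linear_perm.
    + rewrite Cmult_0_l, cexp_RtoC, exp_0. ring.
Qed.

(** * Uniform convergence of weighted coefficient sequences *)

Lemma eventually_forall_lt (P : nat -> nat -> Prop) (K : nat) :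
  (forall k, eventually (P k)) -> eventually (fun j => forall k, (k < K)%nat -> P k j).
Proof.
  intros HP. induction K as [|K IH]; [exists O; intros n _ k Hk; lia|].
  destruct (filter_and _ _ IH (HP K)) as [N HN]. exists N. intros n Hn k Hk.
  destruct (HN n Hn) as [Hlt HK]. destruct (Nat.eq_dec k K) as [->|]; [exact HK|].
  apply Hlt. lia.
Qed.

Lemma eventually_forall_In {A : Type} (P : A -> nat -> Prop) (xs : list A) :
  (forall x, In x xs -> eventually (P x)) -> eventually (fun j => forall x, In x xs -> P x j).
Proof.
  induction xs as [|x xs IH]; intros HP; [exists O; intros n _ y []|].
  destruct (filter_and _ _ (HP x (or_introl eq_refl)) (IH (fun y Hy => HP y (or_intror Hy))))
    as [N HN].
  exists N. intros n Hn y Hy. destruct (HN n Hn) as [Hx Hxs].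
  destruct Hy as [<-|Hy]; auto.
Qed.

Lemma weighted_sup_tends_to_0 (A : nat -> R) (r : nat -> nat -> R) (M b' b e : R) :
  0 < b' < b -> 0 < e -> (forall k, A k <= M * b' ^ k) ->
  (forall j k, 0 <= r j k <= A k) -> (forall k, is_lim_seq (fun j => r j k) (A k)) ->
  eventually (fun j => forall k, / b ^ k * (A k - r j k) <= e).
Proof.
  intros Hb He HA Hr Hlim.
  assert (Hbk : forall k, 0 < b ^ k) by (intros k; apply pow_lt; lra).
  assert (Hq : Rabs (b' / b) < 1).
  { rewrite Rabs_pos_eq by (apply Rdiv_le_0_compat; lra).
    apply Rmult_lt_reg_r with b; [lra|]. unfold Rdiv. rewrite Rmult_assoc, Rinv_l; lra. }
  assert (Hgeom := is_lim_seq_scal_l _ M _ (is_lim_seq_geom _ Hq)). simpl in Hgeom.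
  rewrite Rmult_0_r in Hgeom.
  destruct (proj2 (is_lim_seq_spec _ _) Hgeom (mkposreal e He)) as [K HK].
  assert (Htail : forall k, (K <= k)%nat -> forall j, / b ^ k * (A k - r j k) <= e).
  { intros k Hk j. specialize (HK k Hk). simpl in HK. rewrite Rminus_0_r in HK.
    apply Rabs_lt_between in HK.
    assert (Hgk : M * (b' / b) ^ k = / b ^ k * (M * b' ^ k)).
    { unfold Rdiv. rewrite Rpow_mult_distr, pow_inv. field. apply Rgt_not_eq, Hbk. }
    assert (/ b ^ k * (A k - r j k) <= / b ^ k * (M * b' ^ k)).
    { apply Rmult_le_compat_l; [left; now apply Rinv_0_lt_compat|].
      pose proof (Hr j k). pose proof (HA k). lra. }
    lra. }
  assert (Hhead : forall k, eventually (fun j => Rabs (r j k - A k) < e * b ^ k)).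
  { intros k. exact (proj2 (is_lim_seq_spec _ _) (Hlim k)
      (mkposreal (e * b ^ k) (Rmult_lt_0_compat _ _ He (Hbk k)))). }
  destruct (eventually_forall_lt _ K Hhead) as [N HN]. exists N. intros j Hj k.
  destruct (Nat.lt_ge_cases k K) as [Hk|Hk]; [|now apply Htail].
  specialize (HN j Hj k Hk). apply Rabs_lt_between in HN.
  apply Rmult_le_reg_l with (b ^ k); [apply Hbk|].
  rewrite <- Rmult_assoc, Rinv_r, Rmult_1_l by apply Rgt_not_eq, Hbk. lra.
Qed.

(** * The approximating polynomials *)

Lemma is_lim_seq_mul_ln_1_plus (x : R) (m : nat -> R) :
  is_lim_seq m p_infty -> is_lim_seq (fun j => m j * ln (1 + x / m j)) x.
Proof.
  intros Hm. destruct (Req_dec x 0) as [->|Hx].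
  { apply is_lim_seq_ext with (fun _ => 0); [|apply is_lim_seq_const].
    intros j. unfold Rdiv. now rewrite Rmult_0_l, Rplus_0_r, ln_1, Rmult_0_r. }
  assert (Hax : 0 < Rabs x) by now apply Rabs_pos_lt.
  apply is_lim_seq_spec. intros eps.
  destruct (derivable_pt_lim_ln 1 Rlt_0_1 (eps / Rabs x)) as [d Hd].
  { apply Rdiv_lt_0_compat; [apply cond_pos | exact Hax]. }
  destruct (proj2 (is_lim_seq_spec _ _) Hm (Rabs x / d)) as [N HN].
  exists N. intros j Hj. specialize (HN j Hj). pose proof (cond_pos d) as Hd0.
  assert (Hmj : 0 < m j) by (apply Rle_lt_trans with (2 := HN), Rdiv_le_0_compat; lra).
  assert (Hh : Rabs (x / m j) < d).
  { rewrite Rabs_div, (Rabs_pos_eq (m j)) by lra.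
    apply Rmult_lt_reg_r with (m j); [exact Hmj|].
    unfold Rdiv at 1. rewrite Rmult_assoc, Rinv_l, Rmult_1_r by lra.
    apply Rmult_lt_reg_l with (/ d); [now apply Rinv_0_lt_compat|].
    rewrite <- Rmult_assoc, Rinv_l, Rmult_1_l by lra. now rewrite Rmult_comm. }
  assert (Hh0 : x / m j <> 0) by (apply Rmult_integral_contrapositive; split;
    [exact Hx | apply Rinv_neq_0_compat; lra]).
  specialize (Hd (x / m j) Hh0 Hh). rewrite ln_1 in Hd.
  (* With h = x / m j, the error is x times the difference quotient of ln at 1 minus ln'(1). *)
  replace (m j * ln (1 + x / m j) - x) with (x * ((ln (1 + x / m j) - 0) / (x / m j) - / 1))
    by (field; lra).
  rewrite Rabs_mult. apply Rmult_lt_reg_l with (/ Rabs x); [now apply Rinv_0_lt_compat|].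
  rewrite <- Rmult_assoc, Rinv_l, Rmult_1_l by lra.
  now replace (/ Rabs x * eps) with (eps / Rabs x) by (field; lra).
Qed.

Lemma is_lim_seq_pow_exp (x : R) (n : nat -> nat) :
  is_lim_seq (fun j => INR (n j)) p_infty ->
  is_lim_seq (fun j => (1 + x / INR (n j)) ^ n j) (exp x).
Proof.
  intros Hn.
  assert (Hexp := is_lim_seq_continuous exp _ x
    (derivable_continuous_pt _ _ (derivable_pt_exp x)) (is_lim_seq_mul_ln_1_plus x _ Hn)).
  apply is_lim_seq_ext_loc with (2 := Hexp).
  destruct (proj2 (is_lim_seq_spec _ _) Hn (Rabs x)) as [N HN].
  exists N. intros j Hj. specialize (HN j Hj).
  assert (Hpos : 0 < INR (n j)) by (pose proof (Rabs_pos x); lra).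
  assert (Hbase : 0 < 1 + x / INR (n j)).
  { assert (Hsmall : Rabs (x / INR (n j)) < 1).
    { rewrite Rabs_div, (Rabs_pos_eq (INR (n j))) by lra.
      apply Rmult_lt_reg_r with (INR (n j)); [exact Hpos|].
      unfold Rdiv. rewrite Rmult_assoc, Rinv_l by lra. lra. }
    apply Rabs_lt_between in Hsmall. lra. }
  now rewrite <- ln_pow, exp_ln by (try apply pow_lt; exact Hbase).
Qed.

Fixpoint prefix_rev (beta : nat -> R) (J : nat) : list R :=
  match J with O => nil | S J' => beta J' :: prefix_rev beta J' end.

Lemma partial_prod_prefix_rev (beta : nat -> R) (z : C) (J : nat) :
  partial_prod beta z J = Cprod_linear (prefix_rev beta J) z.
Proof.
  induction J as [|J IH]; [reflexivity|]. simpl. rewrite IH. unfold Cprod_linear; simpl. ring.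
Qed.

Lemma is_lim_seq_RtoC (x : nat -> R) (P : C) :
  filterlim (fun J => RtoC (x J)) eventually (locally P) -> is_lim_seq x (fst P) /\ snd P = 0.
Proof.
  intros HP.
  assert (Hre : is_lim_seq x (fst P)).
  { apply is_lim_seq_spec. intros eps.
    destruct (HP (ball P eps) (locally_ball P eps)) as [N HN].
    exists N. intros n Hn. exact (proj1 (HN n Hn)). }
  split; [exact Hre|].
  assert (Him : is_lim_seq (fun _ : nat => 0) (snd P)).
  { apply is_lim_seq_spec. intros eps.
    destruct (HP (ball P eps) (locally_ball P eps)) as [N HN].
    exists N. intros n Hn. exact (proj2 (HN n Hn)). }
  apply is_lim_seq_unique in Him. rewrite Lim_seq_const in Him. now injection Him.
Qed.

Section Approximation.
Variables (f : C -> C) (c : C) (l : nat) (alpha : R) (beta : nat -> R).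
Hypotheses (alpha_nonneg : 0 <= alpha) (beta_nonneg : forall j, 0 <= beta j)
  (f_product : forall z : C, exists P : C,
     filterlim (partial_prod beta z) eventually (locally P) /\
     f z = (c * z ^ l * cexp (RtoC alpha * z) * P)%C).

Definition approx_factors (J : nat) : list R :=
  repeat (alpha / INR (2 ^ J)) (2 ^ J) ++ prefix_rev beta J.

Definition approx_poly (J : nat) (z : C) : C := (c * z ^ l * Cprod_linear (approx_factors J) z)%C.

Definition approx_coef (J : nat) : nat -> R := PS_incr_n (prod_linear_coef (approx_factors J)) l.

Let Pi (t : R) : R := real (Lim_seq (fun J => prod_linear (prefix_rev beta J) t)).

Lemma f_real_axis (t : R) :
  is_lim_seq (fun J => prod_linear (prefix_rev beta J) t) (Pi t) /\
  f (RtoC t) = (c * RtoC (t ^ l * (exp (alpha * t) * Pi t)))%C.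
Proof.
  destruct (f_product (RtoC t)) as (P & HP & Hft).
  assert (HPt : filterlim (fun J => RtoC (prod_linear (prefix_rev beta J) t))
                  eventually (locally P)).
  { apply filterlim_ext with (2 := HP). intros J.
    now rewrite partial_prod_prefix_rev, Cprod_linear_RtoC. }
  destruct (is_lim_seq_RtoC _ _ HPt) as [Hlim Him].
  assert (HPi : Pi t = fst P) by (unfold Pi; now rewrite (is_lim_seq_unique _ _ Hlim)).
  split; [now rewrite HPi|].
  rewrite Hft, <- RtoC_pow, <- RtoC_mult, cexp_RtoC, HPi.
  destruct P as [p q]; simpl in Him; subst q.
  apply injective_projections; simpl; ring.
Qed.

Lemma approx_step_nonneg (J : nat) : 0 <= alpha / INR (2 ^ J).
Proof.
  apply Rdiv_le_0_compat; [exact alpha_nonneg|].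
  apply lt_0_INR, Nat.neq_0_lt_0, Nat.pow_nonzero. lia.
Qed.

Lemma prefix_rev_nonneg (J : nat) : forall x, In x (prefix_rev beta J) -> 0 <= x.
Proof.
  induction J as [|J IH]; intros x Hx; simpl in Hx; [contradiction|].
  destruct Hx as [<-|Hx]; auto.
Qed.

Lemma approx_factors_nonneg (J : nat) : forall x, In x (approx_factors J) -> 0 <= x.
Proof.
  intros x Hx. apply in_app_or in Hx as [Hx|Hx]; [|now apply (prefix_rev_nonneg J)].
  apply repeat_spec in Hx. subst x. apply approx_step_nonneg.
Qed.

Lemma prod_linear_coef_approx_incr (J k : nat) :
  prod_linear_coef (approx_factors J) k <= prod_linear_coef (approx_factors (S J)) k.
Proof.
  unfold approx_factors, prod_linear_coef. rewrite !fold_right_app.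
  change (2 ^ S J)%nat with (2 * 2 ^ J)%nat.
  replace (alpha / INR (2 * 2 ^ J)) with (alpha / INR (2 ^ J) / 2)
    by (rewrite mult_INR; simpl; field; apply not_0_INR, Nat.pow_nonzero; lia).
  apply coef_dominated_split_repeat; [apply approx_step_nonneg|].
  simpl. apply coef_dominated_mul_linear; [apply beta_nonneg|].
  apply prod_linear_coef_nonneg, prefix_rev_nonneg.
Qed.

Lemma approx_coef_nonneg (J k : nat) : 0 <= approx_coef J k.
Proof.
  unfold approx_coef. rewrite PS_incr_n_simplify.
  destruct (Compare_dec.le_lt_dec l k); [|apply Rle_refl].
  apply prod_linear_coef_nonneg, approx_factors_nonneg.
Qed.

Lemma approx_coef_incr (J k : nat) : approx_coef J k <= approx_coef (S J) k.
Proof.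
  unfold approx_coef. rewrite !PS_incr_n_simplify.
  destruct (Compare_dec.le_lt_dec l k); [apply prod_linear_coef_approx_incr | apply Rle_refl].
Qed.

Lemma is_pseries_approx_coef (J : nat) (t : R) :
  is_pseries (approx_coef J) t (t ^ l * prod_linear (approx_factors J) t).
Proof.
  rewrite <- pow_n_pow. exact (is_pseries_incr_n _ l t _ (is_pseries_prod_linear_coef _ t)).
Qed.

Lemma is_lim_seq_approx (t : R) :
  is_lim_seq (fun J => t ^ l * prod_linear (approx_factors J) t)
    (t ^ l * (exp (alpha * t) * Pi t)).
Proof.
  apply (is_lim_seq_scal_l (fun J => prod_linear (approx_factors J) t) (t ^ l)
           (exp (alpha * t) * Pi t)).
  apply is_lim_seq_ext with
    (fun J => (1 + alpha * t / INR (2 ^ J)) ^ (2 ^ J) * prod_linear (prefix_rev beta J) t).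
  { intros J. unfold approx_factors. rewrite prod_linear_repeat_app.
    f_equal. f_equal. unfold Rdiv. ring. }
  apply is_lim_seq_mult'; [|apply f_real_axis].
  apply (is_lim_seq_pow_exp _ (fun J => 2 ^ J)%nat).
  apply is_lim_seq_ext with (fun J => 2 ^ J); [intros J; now rewrite pow_INR|].
  apply is_lim_seq_geom_p. lra.
Qed.

Let f_coef (k : nat) : R := real (Lim_seq (fun J => approx_coef J k)).

Lemma is_lim_seq_f_coef (k : nat) : is_lim_seq (fun J => approx_coef J k) (f_coef k).
Proof.
  exact (is_lim_seq_coef approx_coef _ _ approx_coef_nonneg approx_coef_incr
           is_pseries_approx_coef is_lim_seq_approx k).
Qed.

Lemma approx_coef_le_f_coef (J k : nat) : approx_coef J k <= f_coef k.
Proof.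
  exact (coef_le_lim approx_coef _ _ approx_coef_nonneg approx_coef_incr
           is_pseries_approx_coef is_lim_seq_approx J k).
Qed.

Lemma is_pseries_f_coef (t : R) : is_pseries f_coef t (t ^ l * (exp (alpha * t) * Pi t)).
Proof.
  exact (is_pseries_coef_lim approx_coef _ (fun t => t ^ l * (exp (alpha * t) * Pi t))
           approx_coef_nonneg approx_coef_incr is_pseries_approx_coef is_lim_seq_approx t).
Qed.

Lemma f_coef_nonneg (k : nat) : 0 <= f_coef k.
Proof. exact (Rle_trans _ _ _ (approx_coef_nonneg 0 k) (approx_coef_le_f_coef 0 k)). Qed.

Lemma CV_radius_f_coef : CV_radius f_coef = p_infty.
Proof.
  apply CV_radius_dominated with f_coef.
  - intros k. rewrite Rabs_pos_eq; [apply Rle_refl | apply f_coef_nonneg].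
  - intros s. eexists. apply is_pseries_f_coef.
Qed.

Lemma CV_radius_approx_error (J : nat) :
  CV_radius (fun k => approx_coef J k - f_coef k) = p_infty.
Proof.
  apply CV_radius_dominated with f_coef.
  - intros k. pose proof (approx_coef_nonneg J k). pose proof (approx_coef_le_f_coef J k).
    rewrite Rabs_left1; lra.
  - intros s. eexists. apply is_pseries_f_coef.
Qed.

Lemma f_real_pseries (t : R) : f (RtoC t) = (c * RtoC (PSeries f_coef t))%C.
Proof. now rewrite (is_pseries_unique _ _ _ (is_pseries_f_coef t)), (proj2 (f_real_axis t)). Qed.

Lemma approx_error_real_pseries (J : nat) (t : R) :
  Cminus (approx_poly J (RtoC t)) (f (RtoC t)) =
  Cmult c (RtoC (PSeries (fun k => approx_coef J k - f_coef k) t)).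
Proof.
  rewrite (is_pseries_unique _ _ _ (is_pseries_ext _ (fun k => approx_coef J k - f_coef k) _ _
             (fun k => eq_refl) (is_pseries_minus _ _ _ _ _
             (is_pseries_approx_coef J t) (is_pseries_f_coef t)))).
  unfold approx_poly. rewrite (proj2 (f_real_axis t)), <- RtoC_pow, Cprod_linear_RtoC.
  apply injective_projections; simpl; unfold plus, opp; simpl; ring.
Qed.

Lemma in_Pplus_approx_poly (J : nat) : in_Pplus (approx_poly J).
Proof. exact (in_Pplus_linear_factors c l _ (approx_factors_nonneg J)). Qed.

Lemma approx_poly_converges (D : nat -> C -> C) (b' b e : R) :
  0 < b' < b -> 0 < e -> deriv_chain f D -> Rbar_lt (seminorm f b') p_infty ->
  eventually (fun J => Rbar_le (seminorm (fun z => Cminus (approx_poly J z) (f z)) b) e).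
Proof.
  intros Hb He HD Hfin.
  destruct (real_pseries_coef_bound f c f_coef D b' (proj1 Hb) CV_radius_f_coef f_real_pseries
              HD Hfin) as [M HM].
  set (A k := Cmod c * (f_coef k * INR (Factorial.fact k))).
  set (r J k := Cmod c * (approx_coef J k * INR (Factorial.fact k))).
  assert (Hfact : forall k, 0 <= INR (Factorial.fact k)) by (intros k; apply pos_INR).
  assert (Hconv : eventually (fun J => forall k, / b ^ k * (A k - r J k) <= e)).
  { apply (weighted_sup_tends_to_0 A r M b' b e Hb He).
    - intros k. unfold A. rewrite <- (Rabs_pos_eq (f_coef k)) by apply f_coef_nonneg. apply HM.
    - intros J k. unfold A, r. pose proof (approx_coef_nonneg J k).
      pose proof (approx_coef_le_f_coef J k). pose proof (Cmod_ge_0 c). pose proof (Hfact k).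
      split; [apply Rmult_le_pos; nra | apply Rmult_le_compat_l; nra].
    - intros k. apply (is_lim_seq_scal_l _ (Cmod c) (f_coef k * INR (Factorial.fact k))).
      apply (is_lim_seq_scal_r _ (INR (Factorial.fact k)) (f_coef k)), is_lim_seq_f_coef. }
  apply (filter_imp _ _) with (2 := Hconv). intros J HJ.
  apply (seminorm_real_pseries_le _ c _ b e (CV_radius_approx_error J)
           (approx_error_real_pseries J)).
  intros k. eapply Rle_trans with (2 := HJ k). right. f_equal. unfold A, r.
  pose proof (approx_coef_le_f_coef J k). rewrite Rabs_left1; lra.
Qed.

End Approximation.

Theorem corollary1p5 :
  forall a : R, 0 <= a ->
  forall f : C -> C, in_Lplus_a a f ->
  forall (bs : list R) (eps : R),
    0 < eps -> (forall b, In b bs -> a < b) ->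
    exists p : C -> C, in_Pplus p /\
      forall b, In b bs -> Rbar_lt (seminorm (fun z => Cminus (p z) (f z)) b) eps.
Proof.
  intros a Ha f [Hf [_ Hfin]] bs eps Heps Hbs.
  destruct (classic (exists D, deriv_chain f D)) as [[D HD] | Hno].
  (* Without derivative chains every seminorm of [0 - f] is the supremum of nothing, -oo. *)
  2: { exists (fun z => (RtoC 0 * z ^ 0 * Cprod_linear nil z)%C).
       split; [now apply in_Pplus_linear_factors|]. intros b _.
       rewrite seminorm_no_deriv_chain; [exact I|]. intros [D HD]. apply Hno.
       exists (fun k z => (- D k z)%C). apply deriv_chain_opp with (2 := HD).
       intros z. unfold Cprod_linear; simpl. ring. }
  destruct Hf as (c & l & alpha & beta & Halpha & _ & Hbeta & _ & Hprod).
  assert (Hev : forall b, In b bs -> eventually (fun J => Rbar_le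
            (seminorm (fun z => Cminus (approx_poly c l alpha beta J z) (f z)) b) (eps / 2))).
  { intros b Hb. specialize (Hbs b Hb).
    apply (approx_poly_converges f c l alpha beta Halpha Hbeta Hprod D ((a + b) / 2)); try lra.
    - exact HD.
    - apply Hfin. lra. }
  destruct (eventually_forall_In _ bs Hev) as [J HJ].
  exists (approx_poly c l alpha beta J). split; [now apply in_Pplus_approx_poly|].
  intros b Hb. specialize (HJ J (le_n J) b Hb).
  destruct (seminorm _ b) as [x| |]; simpl in *; auto; lra.
Qed.
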